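(* Let $G=(V,E)$ be a plane graph that is reduced with respect to Rules 1 and 2, let $D$ be a dominating set of $G$, and let $\mathcal R$ be a maximal $D$-region decomposition of $G$. If $v\in D$ and $u\in N_1(v)$, then $u\in V(\mathcal R)$.
   Context: A plane graph is a planar graph together with a fixed planar embedding. $N(v)$ is the open neighborhood, $N[v]=N(v)\cup\{v\}$, $N(v,w)=N(v)\cup N(w)$, $N[v,w]=N[v]\cup N[w]$, and $N_1(v)=\{u\in N(v):N(u)\setminus N[v]\ne\emptyset\}$. Region: for vertices $v,w$ of a plane graph $G$, a region $R(v,w)$ between $v$ and $w$ is a closed subset of the plane such that (1) its boundary is formed by two simple paths $P_1,P_2$ of $G$ from $v$ to $w$, each of length at most three (the paths may coincide, giving a degenerate region consisting of a single path), and (2) every vertex lying strictly inside $R(v,w)$ belongs to $N(v,w)$. $V(R)$ is the set of vertices lying inside or on the boundary of $R$. $D$-region decomposition: for $D\subseteq V$, a set $\mathcal R$ of regions, each between two vertices of $D$, such that (1) for each $R(v,w)\in\mathcal R$, no vertex of $D$ other than $v,w$ lies in $V(R(v,w))$, and (2) no two regions of $\mathcal R$ intersect except possibly along common boundary. $V(\mathcal R)=\bigcup_{R\in\mathcal R}V(R)$. $\mathcal R$ is maximal if there is no region $R\notin\mathcal R$ such that $\mathcal R\cup\{R\}$ is a $D$-region decomposition with $V(\mathcal R)\subsetneq V(\mathcal R\cup\{R\})$. Reduced: with $N_2(v)=\{u\in N(v)\setminus N_1(v):N(u)\cap N_1(v)\ne\emptyset\}$, $N_3(v)=N(v)\setminus(N_1(v)\cup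 N_2(v))$, and analogously $N_1(v,w),N_2(v,w),N_3(v,w)$ with $N(v,w),N[v,w]$ in place of $N(v),N[v]$: Rule 1 (when $N_3(v)\ne\emptyset$) removes $N_2(v)\cup N_3(v)$ and attaches a new pendant vertex to $v$; Rule 2 (for $v\ne w$ with $N_3(v,w)\ne\emptyset$ not dominated by a single vertex of $N_2(v,w)\cup N_3(v,w)$) in case $N_3(v,w)\subseteq N(v)\cap N(w)$ removes $N_3(v,w)$ and $N_2(v,w)\cap N(v)\cap N(w)$ and adds two new vertices each adjacent to exactly $v$ and $w$; in case $N_3(v,w)\subseteq N(v)$, $\not\subseteq N(w)$ removes $N_3(v,w)$ and $N_2(v,w)\cap N(v)$ and attaches a new pendant vertex to $v$ (symmetrically with $v,w$ exchanged); otherwise removes $N_3(v,w)\cup N_2(v,w)$ and attaches new pendant vertices to both $v$ and $w$. $G$ is reduced if no application of either rule changes $G$ up to isomorphism. *)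

From HB Require Import structures.
From mathcomp Require Import all_boot all_order all_algebra.
From mathcomp Require Import all_classical all_reals all_analysis.
Set Implicit Arguments. Unset Strict Implicit. Unset Printing Implicit Defensive.
Import Order.TTheory GRing.Theory Num.Theory.
Import numFieldNormedType.Exports.

Section Graphs.
Variables (V : finType) (e : rel V).

Definition simple_graph := symmetric e /\ irreflexive e.

Definition nbh (v : V) : {set V} := [set u | e v u].
Definition cnbh (v : V) : {set V} := v |: nbh v.

Definition N1 (v : V) : {set V} :=
  [set u in nbh v | nbh u :\: cnbh v != finset.set0].
Definition N2 (v : V) : {set V} :=
  [set u in nbh v :\: N1 v | nbh u :&: N1 v != finset.set0].
Definition N3 (v : V) : {set V} := nbh v :\: (N1 v :|: N2 v).

Definition nbh2 (v w : V) : {set V} := (nbh v :|: nbh w) :\: [set v; w].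
Definition cnbh2 (v w : V) : {set V} := cnbh v :|: cnbh w.

Definition N1p (v w : V) : {set V} :=
  [set u in nbh2 v w | nbh u :\: cnbh2 v w != finset.set0].
Definition N2p (v w : V) : {set V} :=
  [set u in nbh2 v w :\: N1p v w | nbh u :&: N1p v w != finset.set0].
Definition N3p (v w : V) : {set V} := nbh2 v w :\: (N1p v w :|: N2p v w).

Definition dominating (D : {set V}) :=
  forall u : V, u \in D \/ exists2 d, d \in D & e d u.

(* A graph on (a subset of) an arbitrary finite type: a vertex-presence
   predicate P and an adjacency relation e'.  [iso_to P e'] says that
   G = (V, e) is isomorphic to the graph induced on P by e'. *)
Definition iso_to (T : finType) (P : pred T) (e' : rel T) :=
  exists f : V -> T,
    [/\ injective f, (forall x, P (f x)),
        (forall y, P y -> exists x, f x = y)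
      & forall x y, e' (f x) (f y) = e x y].

(* Result of a rule: the old vertices that are kept (keep), plus at most
   two new vertices (indexed by 'I_2, present according to newv), where
   a new vertex i is adjacent exactly to the old vertices x with att x i. *)
Definition res_present (keep : pred V) (newv : pred 'I_2) : pred (V + 'I_2) :=
  fun z => match z with inl x => keep x | inr i => newv i end.
Definition res_rel (att : V -> 'I_2 -> bool) : rel (V + 'I_2) :=
  fun a b => match a, b with
             | inl x, inl y => e x y
             | inl x, inr i => att x i
             | inr i, inl x => att x i
             | inr _, inr _ => false
             end.

(* Rule 1 at v (applicable when N_3(v) is nonempty): remove
   N_2(v) u N_3(v), attach one new pendant vertex to v. *)
Definition rule1_keep (v : V) : pred V := fun x => x \notin N2 v :|: N3 v.
Definition rule1_new : pred 'I_2 := fun i => val i == 0%N.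
Definition rule1_att (v : V) : V -> 'I_2 -> bool := fun x _ => x == v.

Definition rule2_applicable (v w : V) :=
  [/\ v != w, N3p v w != finset.set0 &
      ~~ [exists x in N2p v w :|: N3p v w, N3p v w \subset cnbh x]].

Definition rule2_keep (v w : V) : pred V := fun x =>
  if (N3p v w \subset nbh v) && (N3p v w \subset nbh w) then
    x \notin N3p v w :|: (N2p v w :&: nbh v :&: nbh w)
  else if N3p v w \subset nbh v then
    x \notin N3p v w :|: (N2p v w :&: nbh v)
  else if N3p v w \subset nbh w then
    x \notin N3p v w :|: (N2p v w :&: nbh w)
  else x \notin N3p v w :|: N2p v w.

Definition rule2_new (v w : V) : pred 'I_2 := fun i =>
  if (N3p v w \subset nbh v) && (N3p v w \subset nbh w) then true
  else if N3p v w \subset nbh v then val i == 0%N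
  else if N3p v w \subset nbh w then val i == 0%N
  else true.

Definition rule2_att (v w : V) : V -> 'I_2 -> bool := fun x i =>
  if (N3p v w \subset nbh v) && (N3p v w \subset nbh w) then (x == v) || (x == w)
  else if N3p v w \subset nbh v then x == v
  else if N3p v w \subset nbh w then x == w
  else if val i == 0%N then x == v else x == w.

(* G is reduced: every application of Rule 1 or Rule 2 yields a graph
   isomorphic to G. *)
Definition reduced :=
  (forall v, N3 v != finset.set0 ->
     iso_to (res_present (rule1_keep v) rule1_new) (res_rel (rule1_att v))) /\
  (forall v w, rule2_applicable v w ->
     iso_to (res_present (rule2_keep v w) (rule2_new v w)) (res_rel (rule2_att v w))).

(* simple path v = x_0, x_1, ..., x_k = w given as v :: p, length k <= 3 *)
Definition spath (v w : V) (p : seq V) :=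
  [/\ path e v p, uniq (v :: p), last v p = w & (size p <= 3)%N].

End Graphs.

Local Open Scope classical_set_scope.
Local Open Scope ring_scope.

Section Plane.
Variables (R : realType) (V : finType) (e : rel V).
Variables (pos : V -> R * R) (arc : V -> V -> R -> R * R).

(* pos x is the point of vertex x; for an edge xy, arc x y restricted to
   [0,1] is a simple curve from pos x to pos y. *)
Definition plane_embedding :=
  [/\ injective pos,
      (forall x y, e x y ->
         [/\ arc x y 0 = pos x, arc x y 1 = pos y,
             {within `[(0:R), 1]%classic, continuous (arc x y)},
             (forall s t, 0 <= s <= 1 -> 0 <= t <= 1 ->
                arc x y s = arc x y t -> s = t)
           & forall t, arc y x t = arc x y (1 - t)]),
      (forall x y z s, e x y -> 0 <= s <= 1 -> arc x y s = pos z ->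
         z = x \/ z = y)
    &
      (forall x y x' y' s t, e x y -> e x' y' -> 0 <= s <= 1 -> 0 <= t <= 1 ->
         arc x y s = arc x' y' t ->
         [\/ x = x' /\ y = y', x = y' /\ y = x' | exists z, arc x y s = pos z])].

Definition edge_pts (x y : V) : set (R * R) := arc x y @` `[(0:R), 1]%classic.

Definition path_pts (v : V) (p : seq V) : set (R * R) :=
  [set z | exists2 x, x \in v :: p & z = pos x] `|`
  [set z | exists2 xy, xy \in zip (v :: p) p & edge_pts xy.1 xy.2 z].

Definition bd (S : set (R * R)) : set (R * R) := closure S `\` interior S.

Definition region (v w : V) (S : set (R * R)) :=
  [/\ closed S,
      (exists p1 p2, [/\ spath e v w p1, spath e v w p2 &
                         bd S = path_pts v p1 `|` path_pts v p2])
    & forall u, interior S (pos u) -> u \in nbh e v :|: nbh e w].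

Definition region_vertices (S : set (R * R)) : set V := [set u | S (pos u)].

(* a region together with its two end vertices *)
Definition regT := (V * V * set (R * R))%type.

Definition region_decomp (D : {set V}) (RR : set regT) :=
  (forall r : regT, RR r ->
     [/\ r.1.1 \in D, r.1.2 \in D, r.1.1 != r.1.2, region r.1.1 r.1.2 r.2
       & forall u, u \in D -> region_vertices r.2 u -> u = r.1.1 \/ u = r.1.2]) /\
  (forall r1 r2 : regT, RR r1 -> RR r2 -> r1 <> r2 ->
     r1.2 `&` r2.2 `<=` bd r1.2 `&` bd r2.2).

Definition decomp_vertices (RR : set regT) : set V :=
  [set u | exists2 r, RR r & region_vertices r.2 u].

Definition maximal_decomp (D : {set V}) (RR : set regT) :=
  region_decomp D RR /\
  ~ (exists r : regT, [/\ ~ RR r, region_decomp D (RR `|` [set r]) &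
        decomp_vertices RR `<` decomp_vertices (RR `|` [set r])]).

End Plane.

(* Suppose u in N_1(v) lies in no region and let x be a neighbour of u outside
   N[v].  An edge whose inside meets the interior of a region R ends in R: to
   leave R it would have to cross the boundary of R, which is made of vertices
   and whole edges, while edges only meet at vertices.  Hence the edges vu and
   ux avoid every region interior.  If u or x is in D we already have a path
   between two vertices of D.  Otherwise let w in D dominate x: either the edge
   xw avoids all interiors too, or it enters a region, so x lies on its boundary,
   i.e. on a path of length at most three between two vertices of D, and the
   boundary edge from x to an end c of that path avoids all interiors because
   regions only meet along boundaries.  In all cases we obtain a path of length
   at most three between two vertices of D, with no other vertex in D and
   avoiding all region interiors; as a degenerate region it adds u to V(R),
   contradicting maximality. *)

From HB Require Import structures.
From mathcomp Require Import all_boot all_order all_algebra.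
From mathcomp Require Import all_classical all_reals all_analysis.
From mathcomp Require Import lra.
Set Implicit Arguments. Unset Strict Implicit. Unset Printing Implicit Defensive.
Import Order.TTheory GRing.Theory Num.Theory.
Import numFieldNormedType.Exports.
Local Open Scope classical_set_scope.
Local Open Scope ring_scope.

Lemma interior0_setU {X : topologicalType} (A B : set X) : closed A ->
  (forall z, ~ interior A z) -> (forall z, ~ interior B z) ->
  forall z, ~ interior (A `|` B) z.
Proof.
move=> cA iA iB z zAB.
have AB_A y : interior (A `|` B) y -> A y.
  move=> yAB; apply: contrapT => nAy; apply: (iB y).
  have : nbhs y (interior (A `|` B) `&` ~` A).
    apply: open_nbhs_nbhs; split => //; apply: openI; first exact: open_interior.
    exact: closed_openC.
  by apply: filterS => w [/interior_subset [] // ? ?].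
apply: (iA z); rewrite /interior.
have : nbhs z (interior (A `|` B)).
  by apply: open_nbhs_nbhs; split => //; exact: open_interior.
exact: filterS.
Qed.

Lemma connected_closed_cover {X : topologicalType} (A C1 C2 : set X) :
  connected A -> closed C1 -> closed C2 -> A `<=` C1 `|` C2 ->
  (forall y, A y -> C1 y -> ~ C2 y) -> (exists2 y, A y & C1 y) -> A `<=` C1.
Proof.
move=> cA cC1 cC2 AC C12 [y Ay C1y].
have AC1E : A `&` ~` C2 = A `&` C1.
  apply/seteqP; split => w [Aw Cw]; split => //; last exact: C12.
  by case: (AC w Aw).
have <- : A `&` ~` C2 = A.
  apply: cA; first by exists y; split => //; exact: C12.
    by exists (~` C2) => //; exact: closed_openC.
  by exists C1; rewrite ?AC1E.
by move=> w; rewrite AC1E => -[].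
Qed.

Lemma arc_exits_closed (R : realType) {X : topologicalType} (S : set X) (g : R -> X) s0 :
  closed S -> {within `[0, 1], continuous g} -> 0 <= s0 <= 1 ->
  interior S (g s0) -> ~ S (g 1) ->
  exists t, [/\ s0 <= t <= 1, S (g t) & ~ interior S (g t)].
Proof.
move=> cS cg /andP[s00 s01] iS nS1; apply: contrapT => noexit.
set K := g @` `[s0, 1].
have cK : connected K.
  apply: connected_continuous_connected; first exact: segment_connected.
  apply: continuous_subspaceW cg => s; rewrite /= !in_itv /= => /andP[? ?].
  by apply/andP; split; lra.
have KSE : K `&` S = K `&` interior S.
  apply/seteqP; split => q [[t tI <-]]; last by move/interior_subset; split => //; exists t.
  move=> Sq; split; first by exists t.
  by apply: contrapT => nint; apply: noexit; exists t; move: tI; rewrite /= in_itv.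
have : K `&` interior S = K.
  apply: cK.
  - by exists (g s0); split => //; exists s0; rewrite //= in_itv /= lexx.
  - by exists (interior S) => //; exact: open_interior.
  - by exists S; rewrite ?KSE.
move=> /seteqP [_ /(_ (g 1))] [].
  by exists 1; rewrite //= in_itv /= lexx andbT.
by move=> _ /interior_subset.
Qed.

Section PlaneTopology.
Variable R : realType.
Notation T := (R * R)%type.

Lemma ball_planeE (p y : T) d :
  ball p d y <-> `|p.1 - y.1| < d /\ `|p.2 - y.2| < d.
Proof. by rewrite /ball /= /prod_ball -!ball_normE. Qed.

Lemma closed_point (x : T) : closed [set x].
Proof. exact/accessible_closed_set1/hausdorff_accessible/norm_hausdorff. Qed.

Lemma interior_point (x z : T) : ~ interior [set x] z.
Proof.
move=> xz; have /= zx := interior_subset xz; subst z.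
move: xz => /nbhs_ballP [d /= d0 /(_ (x.1 + d / 2, x.2))] xE.
have : (x.1 + d / 2, x.2) = x.
  apply: xE; apply/ball_planeE => /=; rewrite subrr normr0; split => //.
  by rewrite opprD addrA subrr sub0r normrN gtr0_norm ?divr_gt0 //; lra.
by move/(congr1 fst) => /=; lra.
Qed.

Lemma closed_image_segment (g : R -> T) a b :
  {within `[a, b], continuous g} -> closed (g @` `[a, b]).
Proof.
move=> cg; apply: compact_closed; first exact: norm_hausdorff.
by apply: continuous_compact => //; exact: segment_compact.
Qed.

Definition hsegment (c a b : R) : set T :=
  (fun t => (t, c)) @` `[Num.min a b, Num.max a b].
Definition vsegment (c a b : R) : set T :=
  (fun t => (c, t)) @` `[Num.min a b, Num.max a b].

Lemma connected_hsegment c a b : connected (hsegment c a b).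
Proof.
apply: connected_continuous_connected; first exact: segment_connected.
by apply: continuous_subspaceT => t; exact: (cvg_pair cvg_id (cvg_cst _)).
Qed.

Lemma connected_vsegment c a b : connected (vsegment c a b).
Proof.
apply: connected_continuous_connected; first exact: segment_connected.
by apply: continuous_subspaceT => t; exact: (cvg_pair (cvg_cst _) cvg_id).
Qed.

Lemma itv_minmax (a b : R) :
  `[Num.min a b, Num.max a b]%classic a /\ `[Num.min a b, Num.max a b]%classic b.
Proof. by case: (leP a b) => ab; rewrite /= !in_itv /=; split; apply/andP; split; lra. Qed.

Lemma hsegment_ends c a b : hsegment c a b (a, c) /\ hsegment c a b (b, c).
Proof. by have [? ?] := itv_minmax a b; split; [exists a|exists b]. Qed.

Lemma vsegment_ends c a b : vsegment c a b (c, a) /\ vsegment c a b (c, b).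
Proof. by have [? ?] := itv_minmax a b; split; [exists a|exists b]. Qed.

Lemma itv_minmax_sub (lo hi a b t : R) : lo < a < hi -> lo < b < hi ->
  Num.min a b <= t <= Num.max a b -> lo < t < hi.
Proof. by case: (leP a b) => ab /andP[? ?] /andP[? ?] /andP[? ?]; apply/andP; split; lra. Qed.

(* Any point of the punctured ball reaches the corner (p.1 + d/2, p.2 + d/2)
   through one horizontal and one vertical segment avoiding p. *)
Lemma connected_punctured_ball (p : T) d : 0 < d -> connected (ball p d `\` [set p]).
Proof.
move=> d0; set A := ball p d `\` [set p]; set h := d / 2.
have h0 : 0 < h by rewrite divr_gt0.
have hd : h < d by rewrite /h; lra.
have close a b : `|a - b| < d = (a - d < b < a + d) by rewrite ltr_distlC.
have hA c a b : `|p.1 - a| < d -> `|p.1 - b| < d -> `|p.2 - c| < d -> c != p.2 ->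
    hsegment c a b `<=` A.
  move=> ha hb hc cp _ [t ht <-]; split; last by move=> /(congr1 snd) /= /eqP; rewrite (negbTE cp).
  apply/ball_planeE; split => //=; rewrite close.
  by move: ha hb; rewrite !close => ha hb; exact: itv_minmax_sub ha hb ht.
have vA c a b : `|p.2 - a| < d -> `|p.2 - b| < d -> `|p.1 - c| < d -> c != p.1 ->
    vsegment c a b `<=` A.
  move=> ha hb hc cp _ [t ht <-]; split; last by move=> /(congr1 fst) /= /eqP; rewrite (negbTE cp).
  apply/ball_planeE; split => //=; rewrite close.
  by move: ha hb; rewrite !close => ha hb; exact: itv_minmax_sub ha hb ht.
have near a : `|a - (a + h)| < d by rewrite opprD addrA subrr sub0r normrN gtr0_norm //; lra.
have far a : a + h != a by apply/eqP; lra.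
suff -> : A = connected_component A (p.1 + h, p.2 + h) by exact: component_connected.
apply/seteqP; split; last exact: connected_component_sub.
move=> y Ay; apply: connected_component_sym.
have [/ball_planeE [y1d y2d] yp] := Ay.
have [y2p|y2p] := eqVneq y.2 p.2.
- have y1p : y.1 != p.1.
    apply: contra_notN yp => /eqP y1p.
    by rewrite /= [LHS]surjective_pairing y1p y2p -surjective_pairing.
  apply: (@connected_component_trans _ _ (y.1, p.2 + h)).
    have [Ey Ez] := vsegment_ends y.1 y.2 (p.2 + h); rewrite -surjective_pairing in Ey.
    exact: (connected_component_max Ey (vA _ _ _ y2d (near _) y1d y1p)
              (@connected_vsegment _ _ _) Ez).
  have [Ey Ez] := hsegment_ends (p.2 + h) y.1 (p.1 + h).
  exact: (connected_component_max Ey (hA _ _ _ y1d (near _) (near _) (far _))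
            (@connected_hsegment _ _ _) Ez).
- apply: (@connected_component_trans _ _ (p.1 + h, y.2)).
    have [Ey Ez] := hsegment_ends y.2 y.1 (p.1 + h); rewrite -surjective_pairing in Ey.
    exact: (connected_component_max Ey (hA _ _ _ y1d (near _) y2d y2p)
              (@connected_hsegment _ _ _) Ez).
  have [Ey Ez] := vsegment_ends (p.1 + h) y.2 (p.2 + h).
  exact: (connected_component_max Ey (vA _ _ _ y2d (near _) (near _) (far _))
            (@connected_vsegment _ _ _) Ez).
Qed.

Lemma itv01E (s : R) : `[0, 1]%classic s <-> 0 <= s <= 1.
Proof. by rewrite /= in_itv. Qed.

Lemma ball_avoid2 (z a b : T) d : 0 < d -> exists q, [/\ ball z d q, q <> a & q <> b].
Proof.
move=> d0; set h := d / 2; have h0 : 0 < h by rewrite divr_gt0.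
have hd : h < d by rewrite /h; lra.
set q1 := (z.1 + h, z.2); set q2 := (z.1 - h, z.2).
have inball q : q \in [:: z; q1; q2] -> ball z d q.
  rewrite !inE => /or3P[] /eqP ->; apply/ball_planeE => /=;
    rewrite ?subrr ?normr0 // ltr_distlC; split => //; apply/andP; split; lra.
have [q /inball zq /andP[/eqP qa /eqP qb]] :
    exists2 q, q \in [:: z; q1; q2] & (q != a) && (q != b).
  case/boolP: ((z != a) && (z != b)) => [za|]; first by exists z; rewrite ?inE ?eqxx.
  case/boolP: ((q1 != a) && (q1 != b)) => [q1a|]; first by exists q1; rewrite ?inE ?eqxx ?orbT.
  move=> /nandP[] /negbNE /eqP E1 /nandP[] /negbNE /eqP E0; exists q2;
    rewrite ?inE ?eqxx ?orbT //; apply/andP; split; apply/eqP => E2;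
    move: (congr1 fst E0) (congr1 fst E1) (congr1 fst E2); rewrite /q1 /q2 /= => *; lra.
by exists q.
Qed.

Section SimpleArc.
Variable g : R -> T.
Hypothesis g_cont : {within `[0, 1], continuous g}.
Hypothesis g_inj : forall s t, 0 <= s <= 1 -> 0 <= t <= 1 -> g s = g t -> s = t.

Lemma simple_arc_interior_inner z : interior (g @` `[0, 1]) z ->
  exists t0 d, [/\ 0 < t0 < 1, 0 < d & ball (g t0) d `<=` g @` `[0, 1]].
Proof.
move=> /nbhs_ballP [d /= d0 zK].
have [p [zp pg0 pg1]] := ball_avoid2 z (g 0) (g 1) d0.
have : nbhs p (g @` `[0, 1]).
  by apply: (filterS zK); apply: open_nbhs_nbhs; split => //; exact: ball_open.
move=> /nbhs_ballP [d' /= d'0 pK].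
have [t0 /itv01E /andP[t0_ge0 t0_le1] gt0] := pK p (ballxx p d'0).
exists t0, d'; split; rewrite ?gt0 //; apply/andP; split; rewrite lt_neqAle.
- by rewrite t0_ge0 andbT; apply: contra_notN pg0 => /eqP t00; rewrite -gt0 -t00.
- by rewrite t0_le1 andbT; apply: contra_notN pg1 => /eqP t01; rewrite -gt0 t01.
Qed.

Lemma simple_arc_near_inner t0 d : 0 < t0 < 1 -> 0 < d ->
  exists s1 s2, [/\ 0 <= s1 < t0, t0 < s2 <= 1, ball (g t0) d (g s1)
                  & ball (g t0) d (g s2)].
Proof.
move=> /andP[t0p t01] d0.
have [eta eta0 etaP] : exists2 eta, 0 < eta &
    forall s, 0 <= s <= 1 -> `|t0 - s| < eta -> ball (g t0) d (g s).
  have t0I : `[0, 1]%classic t0 by apply/itv01E; rewrite !ltW.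
  have := (subspace_continuousP _ _).1 g_cont t0 t0I.
  move=> /(_ _ (nbhsx_ballx (g t0) d d0)); rewrite /= nbhs_simpl /=.
  move=> /nbhs_ballP [eta /= eta0 etaK]; exists eta => // s s01 st.
  by apply: etaK; [rewrite -ball_normE|apply/itv01E].
set m1 := Num.min eta t0; set m2 := Num.min eta (1 - t0).
have /andP[m1e m1t] : (m1 <= eta) && (m1 <= t0) by rewrite -le_min.
have /andP[m2e m2t] : (m2 <= eta) && (m2 <= 1 - t0) by rewrite -le_min.
have m10 : 0 < m1 by rewrite lt_min eta0 t0p.
have m20 : 0 < m2 by rewrite lt_min eta0 subr_gt0 t01.
exists (t0 - m1 / 2), (t0 + m2 / 2); split.
- by apply/andP; split; lra.
- by apply/andP; split; lra.
- apply: etaP; first by apply/andP; split; lra.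
  by rewrite opprB addrC subrK gtr0_norm; lra.
- apply: etaP; first by apply/andP; split; lra.
  by rewrite opprD addrA subrr sub0r normrN gtr0_norm; lra.
Qed.

(* Near an inner point g t0 the arc splits into the closed pieces g [0, t0] and
   g [t0, 1] meeting only at g t0, which would disconnect a punctured ball. *)
Lemma simple_arc_interior0 z : ~ interior (g @` `[0, 1]) z.
Proof.
move=> /simple_arc_interior_inner [t0 [d [t0I d0 ballK]]].
have [s1 [s2 [/andP[s10 s1t] /andP[s2t s21] gs1 gs2]]] := simple_arc_near_inner t0I d0.
have /andP[t00 t01] := t0I.
set A := ball (g t0) d `\` [set g t0].
set C1 := g @` `[0, t0]; set C2 := g @` `[t0, 1].
have inj s t : 0 <= s <= 1 -> 0 <= t <= 1 -> s != t -> g s <> g t.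
  by move=> sI tI /eqP st gst; apply: st; exact: g_inj.
have closedC a b : 0 <= a -> b <= 1 -> closed (g @` `[a, b]).
  move=> a0 b1; apply/closed_image_segment/(continuous_subspaceW _ g_cont).
  by move=> s; rewrite /= !in_itv /= => /andP[? ?]; apply/andP; split; lra.
have cover : A `<=` C1 `|` C2.
  move=> y [/ballK [s /itv01E /andP[? ?] <-] _].
  by have [st|st] := leP s t0; [left|right]; exists s; rewrite //= in_itv /=;
    apply/andP; split; lra.
have disj y : A y -> C1 y -> ~ C2 y.
  move=> Ay [r1 r1I yE] [r2 r2I]; subst y; case: Ay => _ ngt0.
  move: r1I r2I; rewrite /= !in_itv /= => /andP[? ?] /andP[? ?] /esym.
  have [r12|r12] := eqVneq r1 r2.
    by exfalso; apply: ngt0; have -> : r1 = t0 by lra.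
  by apply: inj => //; apply/andP; split; lra.
have AC1 : A `<=` C1.
  apply: (connected_closed_cover (connected_punctured_ball d0)
    (closedC _ _ (lexx 0) (ltW t01)) (closedC _ _ (ltW t00) (lexx 1)) cover disj).
  exists (g s1); last by exists s1; rewrite //= in_itv /= s10 ltW.
  by split=> //; apply: inj; rewrite ?lt_eqF //; apply/andP; split; lra.
have As2 : A (g s2).
  by split=> //; apply: inj; rewrite ?gt_eqF //; apply/andP; split; lra.
have [s] := AC1 _ As2.
rewrite /= in_itv /= => /andP[? ?].
by apply: inj; [apply/andP; split; lra|apply/andP; split; lra|rewrite lt_eqF //; lra].
Qed.

End SimpleArc.

End PlaneTopology.

Lemma in_zip_mem (U : eqType) (s t : seq U) a b :
  (a, b) \in zip s t -> (a \in s) && (b \in t).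
Proof.
elim: s t => [|x s IH] [|y t] //=.
rewrite inE => /orP[/eqP [-> ->]|/IH /andP[h1 h2]]; first by rewrite !inE !eqxx.
by rewrite !inE h1 h2 !orbT.
Qed.

Lemma path_zip (U : eqType) (r : rel U) v p a b :
  path r v p -> (a, b) \in zip (v :: p) p -> r a b.
Proof.
elim: p v => [|y p IH] v //= /andP[rvy pp].
by rewrite inE => /orP[/eqP [-> ->] //|]; exact: IH.
Qed.

Section Embedding.
Variables (R : realType) (V : finType) (e : rel V).
Variables (pos : V -> R * R) (arc : V -> V -> R -> R * R).
Hypothesis sg : simple_graph e.
Hypothesis pe : plane_embedding e pos arc.
Notation T := (R * R)%type.

Lemma adj_sym x y : e x y -> e y x.
Proof. by case: sg => esym _; rewrite esym. Qed.

Lemma adj_neq x y : e x y -> x != y.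
Proof. by case: sg => _ eirr exy; apply: contraTneq exy => ->; rewrite eirr. Qed.

Lemma embedded_edge x y : e x y ->
  [/\ arc x y 0 = pos x, arc x y 1 = pos y, {within `[0, 1], continuous (arc x y)},
      (forall s t, 0 <= s <= 1 -> 0 <= t <= 1 -> arc x y s = arc x y t -> s = t)
    & forall t, arc y x t = arc x y (1 - t)].
Proof. by case: pe => _ + _ _; apply. Qed.

Lemma closed_edge_pts x y : e x y -> closed (edge_pts arc x y).
Proof. by move=> /embedded_edge [_ _ c _ _]; exact: closed_image_segment. Qed.

Lemma edge_pts_interior0 x y z : e x y -> ~ interior (edge_pts arc x y) z.
Proof. by move=> /embedded_edge [_ _ c i _]; exact: simple_arc_interior0. Qed.

Lemma edge_pts_rev x y s : e x y -> 0 <= s <= 1 -> edge_pts arc y x (arc x y s).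
Proof.
move=> exy /andP[s0 s1]; have [_ _ _ _ rev] := embedded_edge (adj_sym exy).
by exists (1 - s); [apply/itv01E/andP; split; lra|rewrite rev].
Qed.

Lemma path_pts_nil y : path_pts pos arc y [::] = [set pos y].
Proof.
apply/seteqP; split => [z [[x]|[xy]] //=|z ->]; first by rewrite inE => /eqP -> ->.
by left; exists y; rewrite ?inE.
Qed.

Lemma path_pts_cons v y p : e v y ->
  path_pts pos arc v (y :: p) = edge_pts arc v y `|` path_pts pos arc y p.
Proof.
move=> evy; have [arc0 _ _ _ _] := embedded_edge evy.
apply/seteqP; split => z.
- case=> [[x]|[xy]].
    rewrite inE => /orP[/eqP -> ->|xin ->]; last by right; left; exists x.
    by left; exists 0; rewrite ?arc0 //; apply/itv01E; rewrite lexx ler01.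
  rewrite /= inE => /orP[/eqP -> //|xin ez]; first by left.
  by right; right; exists xy.
- case=> [ez|[[x xin ->]|[xy xin ez]]].
  + by right; exists (v, y) => //; rewrite /= inE eqxx.
  + by left; exists x => //; rewrite inE xin orbT.
  + by right; exists xy => //; rewrite /= inE xin orbT.
Qed.

Lemma path_pts_closed_interior0 v p : path e v p ->
  closed (path_pts pos arc v p) /\ forall z, ~ interior (path_pts pos arc v p) z.
Proof.
elim: p v => [|y p IH] v /=.
  by move=> _; rewrite path_pts_nil; split; [exact: closed_point|exact: interior_point].
move=> /andP[evy /IH [cP iP]]; rewrite path_pts_cons //; split.
  by apply: closedU => //; exact: closed_edge_pts.
by apply: interior0_setU => //; [exact: closed_edge_pts|move=> z; exact: edge_pts_interior0].
Qed.

Lemma bd_path_pts v p : path e v p -> bd (path_pts pos arc v p) = path_pts pos arc v p.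
Proof.
move=> /path_pts_closed_interior0 [cP iP]; rewrite /bd -(proj1 (closure_id _) cP).
by apply/seteqP; split => z; [case|move=> Pz; split => //; exact: iP].
Qed.

Lemma vertex_in_path_pts v p y : path e v p -> path_pts pos arc v p (pos y) -> y \in v :: p.
Proof.
case: pe => pos_inj _ on_edge _ pp.
move=> [[x xin /pos_inj -> //]|[[a b] ab [s /itv01E s01 E]]].
have /andP[ain bin] := in_zip_mem ab.
by case: (on_edge _ _ _ _ (path_zip pp ab) s01 E) => -> //; rewrite inE bin orbT.
Qed.

Definition edge_saturated (Q : set T) := forall q, Q q ->
  (exists w, q = pos w) \/
  (exists c d t, [/\ e c d, 0 <= t <= 1, q = arc c d t & edge_pts arc c d `<=` Q]).

Lemma edge_saturated_path_pts a p : path e a p -> edge_saturated (path_pts pos arc a p).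
Proof.
move=> pp q [[x _ ->]|[[c d] cd [t /itv01E t01 <-]]]; first by left; exists x.
right; exists c, d, t; split => //; first exact: path_zip pp cd.
by move=> z ez; right; exists (c, d).
Qed.

Lemma edge_saturatedU A B : edge_saturated A -> edge_saturated B ->
  edge_saturated (A `|` B).
Proof.
move=> sA sB q [/sA|/sB] [[w ->]|[c [d [t [cd t01 E sub]]]]]; try by left; exists w.
- by right; exists c, d, t; split => // z /sub; left.
- by right; exists c, d, t; split => // z /sub; right.
Qed.

(* A point where the edge leaves [S] lies on [bd S]: it is neither a vertex
   (that would be an end of the edge) nor an inner point of another edge
   (edges only cross at vertices), so the whole edge is drawn in [bd S]. *)
Lemma edge_into_closed (S : set T) y z s0 : closed S -> edge_saturated (bd S) ->
  e y z -> 0 <= s0 <= 1 -> interior S (arc y z s0) -> S (pos z).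
Proof.
move=> cS satS eyz s01 iS; apply: contrapT => nSz.
have [arc0 arc1 c_arc inj_arc _] := embedded_edge eyz.
case: pe => _ _ on_edge cross.
have nS1 : ~ S (arc y z 1) by rewrite arc1.
have [t [/andP[s0t t1] Sq nint]] := arc_exits_closed cS c_arc s01 iS nS1.
have t01 : 0 <= t <= 1 by case/andP: s01 => s00 _; apply/andP; split; lra.
have bdS q : bd S q <-> S q /\ ~ interior S q.
  by rewrite /bd -(proj1 (closure_id _) cS).
have not_vertex w : arc y z t <> pos w.
  move=> E; case: (on_edge _ _ _ _ eyz t01 E) => ?; subst w; last by apply: nSz; rewrite -E.
  have t0 : t = 0 by apply: inj_arc; rewrite ?arc0 ?lexx ?ler01.
  by apply: nint; have <- : s0 = t by case/andP: s01 => s00 _; lra.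
have s0_notbd : ~ bd S (arc y z s0) by case.
case: (satS _ (proj2 (bdS _) (conj Sq nint))) => [[w /not_vertex //]|].
move=> [c [d [t' [ecd t'01 E sub]]]].
case: (cross _ _ _ _ _ _ eyz ecd t01 t'01 E) => [[? ?]|[? ?]|[w /not_vertex //]]; subst c d.
- by apply: s0_notbd; apply: sub; exists s0 => //; apply/itv01E.
- by apply: s0_notbd; apply: sub; exact: edge_pts_rev.
Qed.

Lemma region_edge_saturated a b S : region e pos arc a b S -> edge_saturated (bd S).
Proof.
case=> _ [p1 [p2 [[pp1 _ _ _] [pp2 _ _ _] ->]]] _.
by apply: edge_saturatedU; exact: edge_saturated_path_pts.
Qed.

Lemma edge_into_region a b S y z s : region e pos arc a b S -> e y z -> 0 <= s <= 1 ->
  interior S (arc y z s) -> S (pos z).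
Proof.
move=> rS; apply: edge_into_closed (region_edge_saturated rS).
by case: rS.
Qed.

Lemma spath_inner_edge a b p x : spath e a b p -> x \in a :: p -> x != a -> x != b ->
  exists2 c, c \in [:: a; b] & e x c /\ edge_pts arc x c `<=` path_pts pos arc a p.
Proof.
move=> sp xin xa xb; have [pp _ _ _] := sp.
suff [c cab [xc|cx]] : exists2 c, c \in [:: a; b] &
    (x, c) \in zip (a :: p) p \/ (c, x) \in zip (a :: p) p.
- exists c => //; split; first exact: path_zip pp xc.
  by move=> q Eq; right; exists (x, c).
- have exc := adj_sym (path_zip pp cx); exists c => //; split => // _ [s /itv01E s01 <-].
  by right; exists (c, x) => //; exact: edge_pts_rev.
case: sp xin xa xb => _ _ <- {b}.
case: p {pp} => [|y1 [|y2 [|y3 [|y4 p]]]] //= _; rewrite !inE.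
- by move=> /eqP ->; rewrite eqxx.
- by move=> /orP[] /eqP ->; rewrite eqxx // andbF.
- move=> /or3P[] /eqP -> //; rewrite ?eqxx // => _ _.
  by exists a; [rewrite inE eqxx|right; rewrite inE eqxx].
- move=> /or4P[] /eqP -> //; rewrite ?eqxx // => _ _.
  + by exists a; [rewrite inE eqxx|right; rewrite inE eqxx].
  + by exists y3; [rewrite !inE eqxx orbT|left; rewrite !inE eqxx !orbT].
Qed.

End Embedding.

Section MaximalDecomposition.
Variables (R : realType) (V : finType) (e : rel V).
Variables (pos : V -> R * R) (arc : V -> V -> R -> R * R).
Hypothesis sg : simple_graph e.
Hypothesis pe : plane_embedding e pos arc.
Variables (D : {set V}) (RR : set (regT R V)).
Hypothesis RRmax : maximal_decomp e pos arc D RR.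
Notation T := (R * R)%type.

Let RRdecomp : region_decomp e pos arc D RR := RRmax.1.

Lemma RR_region r : RR r -> region e pos arc r.1.1 r.1.2 r.2.
Proof. by case/RRdecomp.1. Qed.

Definition outside_regions (z : T) := forall r, RR r -> ~ interior r.2 z.

Definition free_edge (x y : V) := forall s, 0 <= s <= 1 -> outside_regions (arc x y s).

Lemma free_edgeC x y : e x y -> free_edge x y -> free_edge y x.
Proof.
move=> exy fxy s /andP[s0 s1]; have [_ _ _ _ ->] := embedded_edge pe exy.
by apply: fxy; apply/andP; split; lra.
Qed.

Lemma free_edge_end x y : e x y -> free_edge x y -> outside_regions (pos y).
Proof. by move=> exy; have [_ <- _ _ _] := embedded_edge pe exy; apply; rewrite lexx ler01. Qed.

Lemma free_path_pts v y p : path e v (y :: p) ->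
  (forall a b, (a, b) \in zip (v :: y :: p) (y :: p) -> free_edge a b) ->
  forall z, path_pts pos arc v (y :: p) z -> outside_regions z.
Proof.
elim: p v y => [|y' p IH] v y /= /andP[evy pp] fp z.
  have fvy : free_edge v y by apply: fp; rewrite inE eqxx.
  rewrite (path_pts_cons pe) // path_pts_nil => -[[s /itv01E s01 <-]|->].
    exact: fvy.
  exact: free_edge_end fvy.
rewrite (path_pts_cons pe) // => -[[s /itv01E s01 <-]|].
  by apply: fp => //; rewrite inE eqxx.
by apply: IH => // a b ab; apply: fp; rewrite inE ab orbT.
Qed.

Lemma edge_to_uncovered_free y u : ~ decomp_vertices pos RR u -> e y u -> free_edge y u.
Proof.
move=> nu eyu s s01 r RRr iS; apply: nu; exists r => //=.
exact: (edge_into_region sg pe (RR_region RRr) eyu s01 iS).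
Qed.

Lemma edge_from_uncovered_free u x : ~ decomp_vertices pos RR u -> e u x -> free_edge u x.
Proof.
move=> nu eux; have exu := adj_sym sg eux.
exact: (free_edgeC exu (edge_to_uncovered_free nu exu)).
Qed.

Lemma bd_region_outside r z : RR r -> bd r.2 z -> outside_regions z.
Proof.
move=> RRr [clz nint] r' RRr' iz.
have [rr'|ne] := pselect (r = r'); first by subst r'; exact: nint.
have [cS _ _] := RR_region RRr.
have Sz : r.2 z by rewrite (proj1 (closure_id _) cS).
by have [_ []] := RRdecomp.2 r r' RRr RRr' ne z (conj Sz (interior_subset iz)).
Qed.

(* A boundary vertex of a region lies on one of its two boundary paths of
   length at most three, hence is adjacent along the boundary to an end. *)
Lemma boundary_vertex_free_edge r x : RR r -> bd r.2 (pos x) -> x \notin D ->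
  exists2 c, c \in D & e x c /\ free_edge x c.
Proof.
move=> RRr bdx xD; have [aD bD _ rS _] := RRdecomp.1 r RRr.
case: rS bdx => _ [p1 [p2 [sp1 sp2 bdE]]] _ bdx.
have xa : x != r.1.1 by apply: contraNneq xD => ->.
have xb : x != r.1.2 by apply: contraNneq xD => ->.
suff [p sp [pbd Px]] : exists2 p, spath e r.1.1 r.1.2 p &
    path_pts pos arc r.1.1 p `<=` bd r.2 /\ path_pts pos arc r.1.1 p (pos x).
  have xin := vertex_in_path_pts pe (let: And4 pp _ _ _ := sp in pp) Px.
  have [c cab [exc sub]] := spath_inner_edge sg pe sp xin xa xb.
  exists c; first by move: cab; rewrite !inE => /orP[] /eqP ->.
  by split=> // s s01; apply: (bd_region_outside RRr); apply/pbd/sub; exists s => //; apply/itv01E.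
move: (bdx); rewrite bdE => -[P1x|P2x].
- by exists p1 => //; split=> // z Pz; rewrite bdE; left.
- by exists p2 => //; split=> // z Pz; rewrite bdE; right.
Qed.

(* Either the edge from [x] to a dominating vertex is free, or it enters a
   region, which then contains [x] on its boundary. *)
Lemma dominated_free_edge x : dominating e D -> x \notin D -> outside_regions (pos x) ->
  exists2 c, c \in D & e x c /\ free_edge x c.
Proof.
move=> dom xD fx.
have [w wD ewx] : exists2 w, w \in D & e w x.
  by case: (dom x) => [xD'|//]; rewrite xD' in xD.
have exw := adj_sym sg ewx.
have [fxw|] := pselect (free_edge x w); first by exists w.
move=> /existsNP [s /not_implyP [s01 /existsNP [r /not_implyP [RRr /contrapT iS]]]].
apply: (boundary_vertex_free_edge RRr) => //; split; last exact: fx.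
apply: subset_closure; apply: (edge_into_region sg pe (RR_region RRr) ewx (_ : 0 <= 1 - s <= 1)).
- by case/andP: s01 => ? ?; apply/andP; split; lra.
- by have [_ _ _ _ rev] := embedded_edge pe ewx; move: iS; rewrite rev.
Qed.

(* A free path between two vertices of [D] through no other vertex of [D] is
   itself a (degenerate) region; maximality forces its vertices to be covered. *)
Lemma free_path_covered v c y p : v \in D -> c \in D -> spath e v c (y :: p) ->
  (forall z, z \in y :: p -> z != c -> z \notin D) ->
  (forall a b, (a, b) \in zip [:: v, y & p] (y :: p) -> free_edge a b) ->
  forall u, u \in y :: p -> decomp_vertices pos RR u.
Proof.
move=> vD cD sp innerD fp u up; apply: contrapT => nu.
have [pp /andP[vp _] lst _] := sp.
have vc : v != c by apply: contraNneq vp => ->; rewrite -lst /= mem_last.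
set P := path_pts pos arc v (y :: p).
have [cP iP] := path_pts_closed_interior0 pe pp.
have bdP : bd P = P := bd_path_pts pe pp.
have fP := free_path_pts pp fp.
have Pu : P (pos u) by left; exists u; rewrite // inE up orbT.
apply: (proj2 RRmax); exists ((v, c), P); split.
- by move=> RRP; apply: nu; exists ((v, c), P).
- split.
  + move=> r [/RRdecomp.1 //|->] /=; split => //.
      split => //; last by move=> z /iP.
      by exists (y :: p), (y :: p); split => //; rewrite setUid.
    move=> z zD /(vertex_in_path_pts pe pp); rewrite inE => /orP[/eqP ->|zp]; first by left.
    by have [/eqP ->|/(innerD _ zp)] := boolP (z == c); [right|rewrite zD].
  + move=> r1 r2 [RR1|->] [RR2|->] ne //; first exact: RRdecomp.2.
    * move=> z [z1 z2] /=; rewrite bdP; split => //; split; first exact: subset_closure.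
      exact: fP z2 r1 RR1.
    * move=> z [z1 z2] /=; rewrite bdP; split => //; split; first exact: subset_closure.
      exact: fP z1 r2 RR2.
- split; first by move=> z [r RRr rz]; exists r => //; left.
  move=> /(_ u) covered; apply: nu; apply: covered.
  by exists ((v, c), P) => //; right.
Qed.

End MaximalDecomposition.

Theorem lemma6 (R : realType) (V : finType) (e : rel V)
    (pos : V -> R * R) (arc : V -> V -> R -> R * R)
    (D : {set V}) (RR : set (regT R V)) :
  simple_graph e ->
  plane_embedding e pos arc ->
  reduced e ->
  dominating e D ->
  maximal_decomp e pos arc D RR ->
  forall v u : V, v \in D -> u \in N1 e v -> decomp_vertices pos RR u.
Proof.
move=> sg pe _ dom RRmax v u vD.
rewrite inE => /andP[]; rewrite inE => evu /set0Pn [x].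
rewrite !inE negb_or => /andP[/andP[xv nevx] eux].
apply: contrapT => nu.
have [vu ux] := (adj_neq sg evu, adj_neq sg eux).
have fvu := edge_to_uncovered_free sg pe RRmax nu evu.
have fux := edge_from_uncovered_free sg pe RRmax nu eux.
have covered := free_path_covered pe RRmax vD.
have [uD|uD] := boolP (u \in D).
  apply: nu; apply: (covered u u [::] uD _ _ _ u (mem_head _ _)).
  - by split; rewrite //= ?evu ?inE ?vu.
  - by move=> y; rewrite inE => ->.
  - by move=> a b; rewrite inE => /eqP [-> ->].
have [xD|xD] := boolP (x \in D).
  apply: nu; apply: (covered x u [:: x] xD _ _ _ u (mem_head _ _)).
  - by split; rewrite //= ?evu ?eux ?inE ?negb_or ?vu ?ux ?(eq_sym v x) ?xv.
  - by move=> y; rewrite !inE => /orP[] /eqP -> //; rewrite eqxx.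
  - by move=> a b; rewrite !inE => /orP[] /eqP [-> ->].
have [c cD [exc fxc]] := dominated_free_edge sg pe RRmax dom xD (free_edge_end pe eux fux).
have [cv cu] : c != v /\ c != u.
  by split; [apply: contraNneq nevx => <-; exact: adj_sym|apply: contraNneq uD => <-].
apply: nu; apply: (covered c u [:: x; c] cD _ _ _ u (mem_head _ _)).
- by split; rewrite //= ?evu ?eux ?exc ?inE ?negb_or ?vu ?ux ?(adj_neq sg exc)
    ?(eq_sym v x) ?(eq_sym v c) ?(eq_sym u c) ?xv ?cv ?cu.
- by move=> y; rewrite !inE => /or3P[] /eqP -> //; rewrite eqxx.
- by move=> a b; rewrite !inE => /or3P[] /eqP [-> ->].
Qed.
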